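(* Let $\Phi=C_l$ with $l\ge2$, fix a system of positive roots $\Phi^+$, and let $\Delta$ be a nonempty subset of $\Phi^+$. Then there exist a short root $\alpha\in\Phi^+$ and a root $\beta\in\Delta$ such that $(\alpha,\beta)\ne0$ and, for every field $F$ of characteristic $2$, the root subgroup $X_\alpha(F)$ of the Chevalley group $G(\Phi,F)$ commutes elementwise with all root subgroups $X_\gamma(F)$, $\gamma\in\Delta$.
   Context: $X_\gamma(F)=\{x_\gamma(t)\mid t\in F\}$ is the root subgroup of the Chevalley group $G(\Phi,F)$ corresponding to the root $\gamma$; $(\cdot,\cdot)$ is the inner product of the ambient Euclidean space. *)

From HB Require Import structures.
From mathcomp Require Import all_boot all_order all_algebra.
Set Implicit Arguments. Unset Strict Implicit. Unset Printing Implicit Defensive.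
Import Order.TTheory GRing.Theory Num.Theory.
Local Open Scope ring_scope.

Definition vec (l : nat) := {ffun 'I_l -> int}.

Definition ev (l : nat) (i : 'I_l) : vec l := [ffun k => ((k == i) : nat)%:Z].

Definition dotv (l : nat) (v w : vec l) : int := \sum_(k < l) v k * w k.

Definition is_rootC (l : nat) (v : vec l) : Prop :=
  exists (i j : 'I_l),
    (i != j /\ (v = ev i - ev j \/ v = ev i + ev j \/ v = - (ev i + ev j)))
    \/ (i = j /\ (v = ev i + ev i \/ v = - (ev i + ev i))).

Definition is_short (l : nat) (v : vec l) : Prop := dotv v v = 2.

(* a linear functional f (given by its values on e_1..e_l) is regular if it
   vanishes on no root; it then defines the positive system
   Phi^+ = { gamma in Phi | f(gamma) > 0 }.  Every positive system of C_l
   arises this way. *)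
Definition regular_functional (l : nat) (f : vec l) : Prop :=
  forall v : vec l, is_rootC v -> dotv f v != 0.

Definition is_pos_root (l : nat) (f : vec l) (v : vec l) : Prop :=
  is_rootC v /\ 0 < dotv f v.

(* root vector e_v in sp_{2l}(F), with the symplectic form [[0,I],[-I,0]]:
   block matrix [[A, B], [C, -A^T]] where
   A = E_ij for v = e_i - e_j, B = E_ij + E_ji for v = e_i + e_j (E_ii for
   v = 2 e_i), C likewise for v = -(e_i + e_j). *)
Definition rootmx (F : fieldType) (l : nat) (v : vec l) : 'M[F]_(l + l) :=
  block_mx
    (\matrix_(i < l, j < l) ((v == ev i - ev j) : nat)%:R)
    (\matrix_(i < l, j < l) ((v == ev i + ev j) : nat)%:R)
    (\matrix_(i < l, j < l) ((v == - (ev i + ev j)) : nat)%:R)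
    (\matrix_(i < l, j < l) - ((v == ev j - ev i) : nat)%:R).

(* root element x_v(t) = exp(t e_v) = 1 + t e_v  (e_v^2 = 0 in the natural
   representation); X_v(F) = { x_v(t) | t in F }. *)
Definition xroot (F : fieldType) (l : nat) (v : vec l) (t : F) : 'M[F]_(l + l) :=
  1%:M + t *: rootmx F v.

From HB Require Import structures.
From mathcomp Require Import all_boot all_order all_algebra.
From mathcomp Require Import zify.
From Stdlib Require Import Classical.
Set Implicit Arguments. Unset Strict Implicit. Unset Printing Implicit Defensive.
Import Order.TTheory GRing.Theory Num.Theory.
Local Open Scope ring_scope.

(* Choose a short positive root [a] that is non-orthogonal to some root of
   Delta and has maximal height f(a) among such roots.  In the natural
   representation of Sp_{2l}, the root vectors e_a and e_g can fail to commute
   only if a + g is a difference of two weights w_p - w_r with w_r <> -w_p;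
   in characteristic 2 the remaining case a + g = 2 w_p is harmless.  Such a
   difference is a short root, it is positive and higher than a, and the
   norms force (a + g, g) = (g, g) / 2 <> 0, contradicting the maximality of
   f(a). *)

Section InnerProduct.
Variable l : nat.
Implicit Types u v w : vec l.

Lemma dotvC u w : dotv u w = dotv w u.
Proof. by apply: eq_bigr => k _; rewrite mulrC. Qed.

Lemma dotvDl u v w : dotv (u + v) w = dotv u w + dotv v w.
Proof. by rewrite /dotv -big_split; apply: eq_bigr => k _; rewrite !ffunE mulrDl. Qed.

Lemma dotvNl u w : dotv (- u) w = - dotv u w.
Proof. by rewrite /dotv -sumrN; apply: eq_bigr => k _; rewrite !ffunE mulNr. Qed.

Lemma dotvDr u v w : dotv w (u + v) = dotv w u + dotv w v.
Proof. by rewrite !(dotvC w) dotvDl. Qed.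

Lemma dotvNr u w : dotv w (- u) = - dotv w u.
Proof. by rewrite !(dotvC w) dotvNl. Qed.

Lemma dotv0r w : dotv w 0 = 0.
Proof. by rewrite /dotv big1 // => k _; rewrite ffunE mulr0. Qed.

Lemma dotv_evr w (i : 'I_l) : dotv w (ev i) = w i.
Proof.
rewrite /dotv (bigD1 i) //= big1 ?addr0; first by rewrite ffunE eqxx mulr1.
by move=> k /negbTE nki; rewrite ffunE nki mulr0.
Qed.

Lemma dotv_ev (i j : 'I_l) : dotv (ev i) (ev j) = (i == j)%:Z.
Proof. by rewrite dotv_evr ffunE eq_sym. Qed.

End InnerProduct.

Ltac dotv_expand := rewrite ?(dotvDl, dotvNl, dotvDr, dotvNr, dotv_ev).

Section RootSystem.
Variable l : nat.
Implicit Types v : vec l.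

Lemma rootC_norm v : is_rootC v -> dotv v v = 2 \/ dotv v v = 4.
Proof.
move=> [i [j [[nij [->|[->|->]]]|[_ [->|->]]]]]; dotv_expand;
  rewrite ?eqxx ?[j == i]eq_sym ?(negbTE nij); (left; lia) || (right; lia).
Qed.

Lemma rootCN v : is_rootC v -> is_rootC (- v).
Proof.
move=> [i [j [[nij [->|[->|->]]]|[_ [->|->]]]]].
- by exists j, i; left; rewrite eq_sym opprB; split; [|left].
- by exists i, j; left; split => //; right; right.
- by exists i, j; left; rewrite opprK; split => //; right; left.
- by exists i, i; right; split => //; right.
- by exists i, i; right; rewrite opprK; split => //; left.
Qed.

Lemma is_shortN v : is_short v -> is_short (- v).
Proof. by rewrite /is_short dotvNl dotvNr opprK. Qed.

Lemma is_short_evD (i j : 'I_l) : i != j -> is_short (ev i + ev j).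
Proof.
by move=> nij; rewrite /is_short; dotv_expand; rewrite !eqxx [j == i]eq_sym (negbTE nij).
Qed.

Lemma is_short_evB (i j : 'I_l) : i != j -> is_short (ev i - ev j).
Proof.
by move=> nij; rewrite /is_short; dotv_expand; rewrite !eqxx [j == i]eq_sym (negbTE nij).
Qed.

Lemma dotv_root_le (f v : vec l) :
  is_rootC v -> dotv f v <= 2 * \sum_(k < l) `|f k|.
Proof.
have le_sum (i : 'I_l) : `|f i| <= \sum_(k < l) `|f k|.
  by rewrite (bigD1 i) //= lerDl sumr_ge0.
move=> [i [j [[_ [->|[->|->]]]|[_ [->|->]]]]]; dotv_expand; rewrite ?dotv_evr;
  have := le_sum i; have := le_sum j; lia.
Qed.

(* The norm equation 2 = 2 + 2 (v, g) + (g, g) gives (v + g, g) = (g, g) / 2. *)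
Lemma short_addr_dotv_neq0 (v g : vec l) :
  is_short v -> is_short (v + g) -> dotv g g != 0 -> dotv (v + g) g != 0.
Proof.
rewrite /is_short !dotvDl !dotvDr (dotvC g v) => -> sum_short.
by apply: contra => /eqP vgg; move: sum_short; lia.
Qed.

Lemma exists_ord_neq (i : 'I_l) : (2 <= l)%N -> exists k : 'I_l, i != k.
Proof.
move=> l_ge2; have [->|nik] := eqVneq i (Ordinal (ltnW l_ge2)).
  by exists (Ordinal l_ge2); apply/eqP => /(congr1 val).
by exists (Ordinal (ltnW l_ge2)).
Qed.

Lemma exists_short_dotv_neq0 (b : vec l) : (2 <= l)%N -> is_rootC b ->
  exists2 c, is_rootC c /\ is_short c & dotv c b != 0.
Proof.
move=> l_ge2 [i [j [[nij Eb] | [_ Eb]]]].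
  have short_b : is_short b.
    by case: Eb => [->|[->|->]];
      [exact: is_short_evB | exact: is_short_evD | apply/is_shortN/is_short_evD].
  by exists b; [split => //; exists i, j; left | rewrite short_b].
have [k nik] := exists_ord_neq i l_ge2.
exists (ev i + ev k).
  by split; [exists i, k; left; split => //; right; left | exact: is_short_evD].
by case: Eb => ->; dotv_expand; rewrite !eqxx [k == i]eq_sym (negbTE nik).
Qed.

End RootSystem.

(* The natural module F^(l+l) of Sp_{2l}: index [p] has weight [wt p], namely
   e_i on the first block and -e_i on the second; [opp_idx] swaps the blocks. *)
Section NaturalModule.
Variable l : nat.
Implicit Types p q r : 'I_(l + l).

Definition wt p : vec l := match split p with inl i => ev i | inr i => - ev i end.

Definition opp_idx p : 'I_(l + l) :=
  match split p with inl i => rshift l i | inr i => lshift l i end.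

Lemma split_lshift (i : 'I_l) : split (lshift l i) = inl i.
Proof. exact: (unsplitK (inl i)). Qed.

Lemma split_rshift (i : 'I_l) : split (rshift l i) = inr i.
Proof. exact: (unsplitK (inr i)). Qed.

Lemma wt_opp_idx p : wt (opp_idx p) = - wt p.
Proof.
rewrite /wt /opp_idx.
by case: (split_ordP p) => i _; rewrite ?split_lshift ?split_rshift ?opprK.
Qed.

Lemma opp_idxK : involutive opp_idx.
Proof.
move=> p; rewrite /opp_idx.
by case: (split_ordP p) => i ->; rewrite ?split_lshift ?split_rshift.
Qed.

(* Only the lower right block [-E_ji] needs characteristic 2. *)
Lemma rootmxE (F : fieldType) (v : vec l) p q : (2 \in [pchar F])%N ->
  rootmx F v p q = (v == wt p - wt q)%:R.
Proof.
move=> pcharF2; rewrite /wt.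
case: (split_ordP p) => i ->; case: split_ordP => j ->;
  rewrite ?(block_mxEul, block_mxEur, block_mxEdl, block_mxEdr) mxE ?opprK ?opprD //.
by rewrite (oppr_pchar2 pcharF2) addrC.
Qed.

Lemma wtB_short_root p r : wt p - wt r != 0 -> wt r != - wt p ->
  is_rootC (wt p - wt r) /\ is_short (wt p - wt r).
Proof.
rewrite /wt; case: split => i; case: split => j; rewrite ?opprK => nz_pr.
- have nij : i != j by apply: contraNneq nz_pr => ->; rewrite subrr.
  by move=> _; split; [exists i, j; left; split => //; left | exact: is_short_evB].
- move=> nji; have nij : i != j by apply: contraNneq nji => ->.
  by split; [exists i, j; left; split => //; right; left | exact: is_short_evD].
- move=> nji; have nij : i != j by apply: contraNneq nji => ->.
  rewrite -opprD; split; first by exists i, j; left; split => //; right; right.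
  exact/is_shortN/is_short_evD.
- have nji : j != i by apply: contraNneq nz_pr => ->; rewrite addNr.
  move=> _; rewrite addrC.
  by split; [exists j, i; left; split => //; left | exact: is_short_evB].
Qed.

End NaturalModule.

Section RootElementCommutation.
Variables (l : nat) (F : fieldType).
Hypothesis pcharF2 : (2 \in [pchar F])%N.
Implicit Types a g : vec l.

(* Entry (p, r) of both products counts the q with w_p - w_q and w_q - w_r
   equal to the two roots, so it vanishes unless a + g = w_p - w_r; when
   moreover w_r = -w_p, the involution [opp_idx] matches the two sums. *)
Lemma rootmx_comm a g :
  (forall p r, a + g = wt p - wt r -> wt r = - wt p) ->
  comm_mx (rootmx F a) (rootmx F g).
Proof.
move=> opp_wt; apply/matrixP => p r; rewrite !mxE.
under eq_bigr do rewrite !(rootmxE _ _ _ pcharF2).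
under [RHS]eq_bigr do rewrite !(rootmxE _ _ _ pcharF2).
have [ag_pr | ag_npr] := eqVneq (a + g) (wt p - wt r).
  rewrite [RHS](reindex_inj (can_inj (@opp_idxK l))); apply: eq_bigr => q _.
  by rewrite !wt_opp_idx (opp_wt _ _ ag_pr) !opprK mulrC addrC [- _ + _]addrC.
rewrite !big1 // => q _.
  case: eqP => [eg|]; case: eqP => [ea|]; rewrite ?mul0r ?mulr0 //.
  by move: ag_npr; rewrite eg ea addrC addrA subrK eqxx.
case: eqP => [ea|]; case: eqP => [eg|]; rewrite ?mul0r ?mulr0 //.
by move: ag_npr; rewrite eg ea addrA subrK eqxx.
Qed.

Lemma xroot_comm a g : comm_mx (rootmx F a) (rootmx F g) ->
  forall t u : F, comm_mx (xroot a t) (xroot g u).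
Proof.
move=> comm_ag t u; apply: comm_mxD; first exact: comm_mx1.
apply/comm_mx_sym/comm_mxD; first exact: comm_mx1.
by rewrite /comm_mx -!scalemxAl -!scalemxAr comm_ag !scalerA mulrC.
Qed.

End RootElementCommutation.

Lemma exists_argmax_int (T : Type) (P : T -> Prop) (h : T -> int) (M : int) :
  (forall x, P x -> h x <= M) -> (exists x, P x) ->
  exists2 x, P x & forall y, P y -> h y <= h x.
Proof.
move=> le_M [x0 Px0].
have maximal x : P x -> ~ (exists2 y, P y & h x < h y) ->
    exists2 x, P x & forall y, P y -> h y <= h x.
  move=> Px no_higher; exists x => // y Py.
  by rewrite leNgt; apply/negP => lt_xy; apply: no_higher; exists y.
suff: forall n x, P x -> M - h x <= n%:Z -> exists2 x, P x & forall y, P y -> h y <= h x.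
  by move/(_ `|M - h x0|%N x0 Px0); apply; rewrite abszE ler_norm.
elim=> [|n IH] x Px le_n;
  have [[y Py lt_xy] | /(maximal x Px) //] := classic (exists2 y, P y & h x < h y).
  by have := le_M y Py; lia.
by apply: (IH y Py); lia.
Qed.

Section HighestShortRoot.
Variables (l : nat) (f : vec l) (Delta : vec l -> Prop).
Hypothesis Delta_pos : forall g, Delta g -> is_pos_root f g.

Definition admissible (a : vec l) : Prop :=
  [/\ is_pos_root f a, is_short a & exists2 b, Delta b & dotv a b != 0].

Lemma exists_admissible : (2 <= l)%N -> regular_functional f ->
  (exists b, Delta b) -> exists a, admissible a.
Proof.
move=> l_ge2 f_reg [b Db]; have [rb _] := Delta_pos Db.
have [c [rc sc] cb_neq0] := exists_short_dotv_neq0 l_ge2 rb.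
have [fc_gt0 | fc_le0] := ltrP 0 (dotv f c).
  by exists c; split => //; exists b.
have fc_neq0 := f_reg c rc.
exists (- c); split; [split | exact: is_shortN | exists b => //].
- exact: rootCN.
- by rewrite dotvNr; lia.
- by rewrite dotvNl oppr_eq0.
Qed.

Lemma admissible_addr a g : admissible a -> Delta g ->
  is_rootC (a + g) -> is_short (a + g) ->
  admissible (a + g) /\ dotv f a < dotv f (a + g).
Proof.
move=> [[_ fa_gt0] sa _] Dg rag sag; have [rg fg_gt0] := Delta_pos Dg.
have fag : dotv f (a + g) = dotv f a + dotv f g by rewrite dotvDr.
split; last by rewrite fag; lia.
split=> //; first by split=> //; rewrite fag; lia.
exists g => //; apply: short_addr_dotv_neq0 => //.
by case: (rootC_norm rg) => ->.
Qed.

Lemma maximal_admissible_wt_opp a g :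
  admissible a -> (forall a', admissible a' -> dotv f a' <= dotv f a) -> Delta g ->
  forall p r, a + g = wt p - wt r -> wt r = - wt p.
Proof.
move=> adm_a max_a Dg p r ag_pr.
have [// | nopp] := eqVneq (wt r) (- wt p); exfalso.
have [[_ fa_gt0] _ _] := adm_a; have [_ fg_gt0] := Delta_pos Dg.
have nz_pr : wt p - wt r != 0.
  apply: contraTneq fa_gt0 => pr0.
  by have := congr1 (dotv f) pr0; rewrite -ag_pr dotvDr dotv0r; lia.
have [rag sag] := wtB_short_root nz_pr nopp; rewrite -ag_pr in rag sag.
have [adm_ag lt_a_ag] := admissible_addr adm_a Dg rag sag.
by have := max_a _ adm_ag; lia.
Qed.

End HighestShortRoot.

Theorem lemma5p7 (l : nat) (hl : (2 <= l)%N) (f : vec l)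
    (hf : regular_functional f) (Delta : vec l -> Prop)
    (hDpos : forall g, Delta g -> is_pos_root f g)
    (hDne : exists g, Delta g) :
  exists (a b : vec l),
    [/\ is_pos_root f a, is_short a, Delta b, dotv a b != 0 &
      forall (F : fieldType), (2 \in [pchar F])%N ->
        forall g, Delta g ->
          forall t u : F, xroot a t *m xroot g u = xroot g u *m xroot a t].
Proof.
have bounded a : admissible f Delta a -> dotv f a <= 2 * \sum_(k < l) `|f k|.
  by case=> [[ra _] _ _]; exact: dotv_root_le.
have [a adm_a max_a] :=
  exists_argmax_int bounded (exists_admissible hDpos hl hf hDne).
have [pos_a short_a [b Db ab_neq0]] := adm_a.
exists a, b; split=> // F pcharF2 g Dg.
apply/xroot_comm/rootmx_comm => //.
exact: maximal_admissible_wt_opp adm_a max_a Dg.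
Qed.
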